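(* Let $(X_m)_{m\in\mathbb Z}$ and $(Y_m)_{m\in\mathbb Z}$ be homogeneous second order recurrence sequences with constant coefficients that possess the same recurrence relation. Let $a,b,c,d,e,m$ be integers with $$\Delta_{xy}:=X_{d-a}Y_{e-b}-X_{e-a}Y_{d-b}\neq 0.$$ Then $$(X_{d-a}Y_{e-b}-X_{e-a}Y_{d-b})X_{m-c}=(X_{d-c}Y_{e-b}-X_{e-c}Y_{d-b})X_{m-a}+(X_{d-a}X_{e-c}-X_{e-a}X_{d-c})Y_{m-b}.$$
   Context: A homogeneous second order recurrence sequence with constant coefficients is a sequence $(X_m)_{m\in\mathbb Z}$ of complex numbers for which there are constants $p,q\in\mathbb C$, $q\neq 0$, with $X_m=pX_{m-1}+qX_{m-2}$ for all $m\in\mathbb Z$. Two such sequences possess the same recurrence relation if they satisfy it with the same constants $p,q$. *)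

(* Complex numbers are modelled by an arbitrary
   numClosedFieldType C (the MathComp abstraction of C, e.g. algC). *)
From HB Require Import structures.
From mathcomp Require Import all_boot all_order all_algebra.
Set Implicit Arguments. Unset Strict Implicit. Unset Printing Implicit Defensive.
Import Order.TTheory GRing.Theory Num.Theory.
Local Open Scope ring_scope.

Definition satisfies_rec (C : numClosedFieldType) (p q : C) (X : int -> C) : Prop :=
  q != 0 /\ forall m : int, X m = p * X (m - 1) + q * X (m - 2).

(* Every solution of the recurrence is determined by its values at 0 and 1,
   linearly and with coefficients that depend only on the index: Z i =
   al_i Z 0 + be_i Z 1.  Applying this to the shifted solutions X (. - c),
   X (. - a) and Y (. - b) at the indices m, d and e writes both sides of the
   identity as polynomials in the same nine coefficients and six initial
   values, and the identity becomes a polynomial identity. *)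
From HB Require Import structures.
From mathcomp Require Import all_boot all_order all_algebra.
From mathcomp Require Import ring zify.
Set Implicit Arguments. Unset Strict Implicit. Unset Printing Implicit Defensive.
Import Order.TTheory GRing.Theory Num.Theory.
Local Open Scope ring_scope.

Lemma int_ind2 (P : int -> Prop) :
  P 0 -> P 1 ->
  (forall i, P i -> P (i + 1) -> P (i + 2)) ->
  (forall i, P (i + 1) -> P (i + 2) -> P i) ->
  forall i, P i.
Proof.
move=> P0 P1 up down.
have pos (n : nat) : P n /\ P n.+1.
  elim: n => [|n [Pn Pn1]]; first by [].
  split=> //; have -> : n.+2%:Z = n%:Z + 2 by lia.
  by apply: up; last by have -> : n%:Z + 1 = n.+1 by lia.
have neg (n : nat) : P (- n%:Z) /\ P (1 - n%:Z).
  elim: n => [|n [Pn Pn1]]; first by [].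
  split; last by have -> : 1 - n.+1%:Z = - n%:Z by lia.
  apply: down; first by have -> : - n.+1%:Z + 1 = - n%:Z by lia.
  by have -> : - n.+1%:Z + 2 = 1 - n%:Z by lia.
case=> n; first exact: (pos n).1.
have := (neg n.+1).1; congr P; lia.
Qed.

Section SecondOrderRecurrence.

Variables (C : numClosedFieldType) (p q : C).

Lemma satisfies_rec_shift (X : int -> C) (s : int) :
  satisfies_rec p q X -> satisfies_rec p q (fun n => X (n - s)).
Proof.
move=> [hq hX]; split=> // n /=.
by rewrite hX; congr (_ * X _ + _ * X _); lia.
Qed.

Lemma satisfies_rec_step (X : int -> C) (i : int) :
  satisfies_rec p q X -> X (i + 2) = p * X (i + 1) + q * X i.
Proof.
by case=> _ hX; rewrite hX; congr (_ * X _ + _ * X _); lia.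
Qed.

Definition linear_in_initial_values (i : int) :=
  exists al be : C,
    forall Z, satisfies_rec p q Z -> Z i = al * Z 0 + be * Z 1.

Lemma linear_in_initial_values_all (i : int) :
  q != 0 -> linear_in_initial_values i.
Proof.
move=> hq; elim/int_ind2: i.
- by exists 1, 0 => Z _; ring.
- by exists 0, 1 => Z _; ring.
- move=> i [a0 [b0 h0]] [a1 [b1 h1]].
  exists (p * a1 + q * a0), (p * b1 + q * b0) => Z hZ.
  by rewrite satisfies_rec_step // h0 // h1 //; ring.
- move=> i [a1 [b1 h1]] [a2 [b2 h2]].
  exists (q^-1 * (a2 - p * a1)), (q^-1 * (b2 - p * b1)) => Z hZ.
  have := satisfies_rec_step i hZ; rewrite h1 // h2 // => E.
  have qZ : q * Z i = (a2 - p * a1) * Z 0 + (b2 - p * b1) * Z 1.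
    by rewrite -[q * Z i](addKr (p * (a1 * Z 0 + b1 * Z 1))) -E; ring.
  by apply: (mulfI hq); rewrite qZ; field.
Qed.

End SecondOrderRecurrence.

Theorem lemma1 (C : numClosedFieldType) (p q : C) (X Y : int -> C)
  (hX : satisfies_rec p q X) (hY : satisfies_rec p q Y)
  (a b c d e m : int)
  (hD : X (d - a) * Y (e - b) - X (e - a) * Y (d - b) != 0) :
  (X (d - a) * Y (e - b) - X (e - a) * Y (d - b)) * X (m - c) =
  (X (d - c) * Y (e - b) - X (e - c) * Y (d - b)) * X (m - a)
  + (X (d - a) * X (e - c) - X (e - a) * X (d - c)) * Y (m - b).
Proof.
have hXc := satisfies_rec_shift c hX.
have hXa := satisfies_rec_shift a hX.
have hYb := satisfies_rec_shift b hY.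
have [am [bm Hm]] := linear_in_initial_values_all p m hX.1.
have [ad [bd Hd]] := linear_in_initial_values_all p d hX.1.
have [ae [be He]] := linear_in_initial_values_all p e hX.1.
move: (Hm _ hXc) (Hm _ hXa) (Hm _ hYb) (Hd _ hXc) (Hd _ hXa) (Hd _ hYb)
      (He _ hXc) (He _ hXa) (He _ hYb) => /= -> -> -> -> -> -> -> -> ->.
ring.
Qed.
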